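(* Let a binary game be given as described in the context, and suppose Assumptions (A1) and (A2) hold. (i) If $\big(x_i,y_i,\widetilde y_i^{(1)},\widetilde y_i^{(0)},\widetilde\lambda_i^{(1)},\widetilde\lambda_i^{(0)},\kappa_i^{(1)},\kappa_i^{(0)},\zeta_i^{(1)},\zeta_i^{(0)}\big)_{i\in I}$ is an optimal solution of problem (P), then $(x_i,y_i)_{i\in I}$ with compensation $(\zeta_i)_{i\in I}$, $\zeta_i=\zeta_i^{(1)}+\zeta_i^{(0)}$, is a binary quasi-equilibrium. (ii) Conversely, if $(x_i,y_i)_{i\in I}$ with compensation $(\zeta_i)_{i\in I}$ is a binary quasi-equilibrium, then there exist vectors $\big(\widetilde y_i^{(1)},\widetilde y_i^{(0)},\widetilde\lambda_i^{(1)},\widetilde\lambda_i^{(0)},\kappa_i^{(1)},\kappa_i^{(0)},\zeta_i^{(1)},\zeta_i^{(0)}\big)_{i\in I}$ such that the combined point is feasible for problem (P).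
   Context: Binary game: players $i\in I=\{1,\dots,n\}$. Player $i$ chooses $x_i\in\{0,1\}$ and $y_i\in\mathbb{R}^m$ and solves $\min f_i(x_i,y_i,y_{-i})$ subject to $g_i(x_i,y_i)\le 0$, with $g_i:\{0,1\}\times\mathbb{R}^m\to\mathbb{R}^k$, $y_{-i}=(y_j)_{j\ne i}$; $K_i=\{(x_i,y_i):g_i(x_i,y_i)\le0\}$. Binary quasi-equilibrium: a vector $((x_i^*,y_i^* )\in K_i)_{i\in I}$ and compensations $\zeta_i\ge0$ such that for every $i$: (1) $y_i^*$ minimizes $f_i(x_i^*,\cdot,y_{-i}^* )$ over $\{y_i:g_i(x_i^*,y_i)\le0\}$; (2) $f_i(x_i^*,y_i^*,y_{-i}^* )-\zeta_i\le f_i(x_i^\times,y_i^\times,y_{-i}^* )$, where $x_i^\times=1-x_i^*$ and $y_i^\times$ minimizes $f_i(x_i^\times,\cdot,y_{-i}^* )$ over $\{y_i:g_i(x_i^\times,y_i)\le0\}$; (3) $\zeta_i$ is the minimal nonnegative number satisfying (2). Assumption (A1): for each $i$ and each fixed $x_i$ (and fixed $y_{-i}$), the KKT conditions of player $i$'s problem with respect to $y_i$ are necessary and sufficient, and $\{y_i:g_i(x_i,y_i)\le0\}$ is compact and non-empty. Assumption (A2): $F$ and $G$ (below) are convex quadratic or linear functions for every fixed value of the binary variables, and $\partial G/\partial\zeta_i>0$ for all $i$. Problem (P): with a sufficiently large constant $\widetilde K>0$ (larger than the difference between any upper and lower bounds on each $y_i$ and than the difference between maximum and minimum of each $f_i$),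 minimize $F((x_i,y_i)_{i\in I})+G((\zeta_i^{(1)},\zeta_i^{(0)})_{i\in I})$ over $x_i\in\{0,1\}$, $y_i,\widetilde y_i^{(1)},\widetilde y_i^{(0)}\in\mathbb{R}^m$, $\widetilde\lambda_i^{(1)},\widetilde\lambda_i^{(0)}\in\mathbb{R}^k_+$, $\kappa_i^{(1)},\kappa_i^{(0)},\zeta_i^{(1)},\zeta_i^{(0)}\in\mathbb{R}_+$, subject to, for all $i$ and $b\in\{0,1\}$: $\nabla_{y_i} f_i(b,\widetilde y_i^{(b)},y_{-i})+(\widetilde\lambda_i^{(b)})^T\nabla_{y_i} g_i(b,\widetilde y_i^{(b)})=0$; $0\le -g_i(b,\widetilde y_i^{(b)})\perp\widetilde\lambda_i^{(b)}\ge0$; $f_i(1,\widetilde y_i^{(1)},y_{-i})+\kappa_i^{(1)}-\zeta_i^{(1)}-\kappa_i^{(0)}+\zeta_i^{(0)}=f_i(0,\widetilde y_i^{(0)},y_{-i})$; $\kappa_i^{(1)}+\zeta_i^{(1)}\le x_i\widetilde K$; $\kappa_i^{(0)}+\zeta_i^{(0)}\le(1-x_i)\widetilde K$; $\widetilde y_i^{(0)}-x_i\widetilde K\le y_i\le\widetilde y_i^{(0)}+x_i\widetilde K$; $\widetilde y_i^{(1)}-(1-x_i)\widetilde K\le y_i\le\widetilde y_i^{(1)}+(1-x_i)\widetilde K$. *)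

From HB Require Import structures.
From mathcomp Require Import all_boot all_order all_algebra.
From mathcomp Require Import all_classical all_reals all_analysis.
Set Implicit Arguments. Unset Strict Implicit. Unset Printing Implicit Defensive.
Import Order.TTheory GRing.Theory Num.Theory.
Import numFieldNormedType.Exports.
Local Open Scope classical_set_scope.
Local Open Scope ring_scope.

Section BinaryGame.
Variable R : realType.

Definition partial (p : nat) (h : 'rV[R]_p -> R) (j : 'I_p) (v : 'rV[R]_p) : R :=
  derive1 (fun t : R => h (v + t *: delta_mx 0 j)) 0.

Definition grad (p : nat) (h : 'rV[R]_p -> R) (v : 'rV[R]_p) : 'rV[R]_p :=
  \row_j partial h j v.

Definition psd (p : nat) (Q : 'M[R]_p) : Prop :=
  forall v : 'rV[R]_p, 0 <= (v *m Q *m v^T) 0 0.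
Definition cvx_quad (p : nat) (h : 'rV[R]_p -> R) : Prop :=
  exists (Q : 'M[R]_p) (c : 'rV[R]_p) (d : R), psd Q /\
    forall v, h v = (v *m Q *m v^T) 0 0 + (v *m c^T) 0 0 + d.

Variables n m k : nat.
(* Game data.  A strategy profile y is an n x m matrix whose i-th row is y_i.
   f i b v y = f_i(b, v, y_{-i}) (row i of y is ignored, see hypothesis
   f_indep below); g i b v = g_i(b, v) in R^k. *)
Variable f : 'I_n -> bool -> 'rV[R]_m -> 'M[R]_(n, m) -> R.
Variable g : 'I_n -> bool -> 'rV[R]_m -> 'rV[R]_k.

Definition f_indep : Prop :=
  forall i b v (y y' : 'M[R]_(n, m)),
    (forall j, j != i -> row j y = row j y') -> f i b v y = f i b v y'.

Definition Kset (i : 'I_n) (b : bool) : set 'rV[R]_m :=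
  [set v | forall l, (g i b v) 0 l <= 0].

Definition is_min (i : 'I_n) (b : bool) (y : 'M[R]_(n, m)) (v : 'rV[R]_m) : Prop :=
  Kset i b v /\ forall w, Kset i b w -> f i b v y <= f i b w y.

Definition KKT (i : 'I_n) (b : bool) (y : 'M[R]_(n, m)) (v : 'rV[R]_m)
    (lam : 'rV[R]_k) : Prop :=
  grad (fun w => f i b w y) v
    + \sum_(l < k) lam 0 l *: grad (fun w => (g i b w) 0 l) v = 0
  /\ forall l, 0 <= - (g i b v) 0 l /\ 0 <= lam 0 l
               /\ (g i b v) 0 l * lam 0 l = 0.

Definition A1 : Prop :=
  forall i b (y : 'M[R]_(n, m)),
    Kset i b !=set0 /\ compact (Kset i b) /\
    forall v, is_min i b y v <-> exists lam, KKT i b y v lam.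

Definition quasi_eq (x : 'I_n -> bool) (y : 'M[R]_(n, m)) (zeta : 'I_n -> R) : Prop :=
  forall i,
    is_min i (x i) y (row i y) /\ 0 <= zeta i /\
    exists yx, is_min i (~~ x i) y yx /\
      f i (x i) (row i y) y - zeta i <= f i (~~ x i) yx y /\
      forall z, 0 <= z -> f i (x i) (row i y) y - z <= f i (~~ x i) yx y ->
        zeta i <= z.

Definition bR (b : bool) : R := (b : nat)%:R.

(* feasibility for problem (P); b = true stands for superscript (1),
   b = false for superscript (0). *)
Definition feasP (K : R) (x : 'I_n -> bool) (y : 'M[R]_(n, m))
    (yt : 'I_n -> bool -> 'rV[R]_m) (lam : 'I_n -> bool -> 'rV[R]_k)
    (kap zet : 'I_n -> bool -> R) : Prop :=
  forall i,
    (forall b, KKT i b y (yt i b) (lam i b) /\ 0 <= kap i b /\ 0 <= zet i b) /\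
    f i true (yt i true) y + kap i true - zet i true - kap i false + zet i false
      = f i false (yt i false) y /\
    kap i true + zet i true <= bR (x i) * K /\
    kap i false + zet i false <= (1 - bR (x i)) * K /\
    (forall j, (yt i false) 0 j - bR (x i) * K <= y i j
               <= (yt i false) 0 j + bR (x i) * K) /\
    (forall j, (yt i true) 0 j - (1 - bR (x i)) * K <= y i j
               <= (yt i true) 0 j + (1 - bR (x i)) * K).

Variable F : ('I_n -> bool) -> 'M[R]_(n, m) -> R.
(* G evaluated at (zeta^(1), zeta^(0)) given as two row vectors *)
Variable G : 'rV[R]_n -> 'rV[R]_n -> R.

Definition objP (x : 'I_n -> bool) (y : 'M[R]_(n, m)) (zet : 'I_n -> bool -> R) : R :=
  F x y + G (\row_i zet i true) (\row_i zet i false).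

Definition Gflat (z : 'rV[R]_(n + n)) : R := G (lsubmx z) (rsubmx z).

Definition A2 : Prop :=
  (forall x, cvx_quad (fun v : 'rV[R]_(n * m) => F x (vec_mx v))) /\
  cvx_quad Gflat /\
  (forall z : 'rV[R]_(n + n), (forall j, 0 <= z 0 j) ->
     forall j, 0 < partial Gflat j z).

Definition bigK (K : R) : Prop :=
  0 < K /\
  (forall i b b' v v', Kset i b v -> Kset i b' v' ->
     forall j, `|v 0 j - v' 0 j| < K) /\
  (forall i (y : 'M[R]_(n, m)), (forall j, exists b, Kset j b (row j y)) ->
     forall b b' v v', Kset i b v -> Kset i b' v' ->
       `|f i b v y - f i b' v' y| < K).

End BinaryGame.

(* Optimality forces complementarity: if both [kap i b] and [zet i b] were
   positive, lowering them by the same amount keeps (P) feasible (only their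
   difference enters the balance equation) and strictly lowers [G], which is
   convex quadratic and increasing on the nonnegative orthant.  With
   complementarity, the big-M constraints pin [y_i] to the branch [x_i] and
   switch the other branch's compensations off, and the balance equation reads
   [f_i(x_i) + kap - zet = f_i(1 - x_i)]: this is exactly the minimality of
   [zeta_i = zet].  Conversely, an equilibrium is completed by the KKT
   multipliers given by (A1) and by the positive and negative parts of
   [f_i(1 - x_i) - f_i(x_i)], whose sum is below [K]. *)
From HB Require Import structures.
From mathcomp Require Import all_boot all_order all_algebra.
From mathcomp Require Import all_classical all_reals all_analysis.
From mathcomp Require Import ring lra.

Import Order.TTheory GRing.Theory Num.Theory.
Import numFieldNormedType.Exports.
Local Open Scope classical_set_scope.
Local Open Scope ring_scope.

Lemma maxr0_subN (R : realDomainType) (x : R) : Num.max x 0 - Num.max (- x) 0 = x.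
Proof. by rewrite !maxEle; case: (leP x 0); case: (leP (- x) 0); lra. Qed.

Lemma maxr0_addN (R : realDomainType) (x : R) : Num.max x 0 + Num.max (- x) 0 = `|x|.
Proof.
rewrite !maxEle; case: (leP x 0) => hx; rewrite ?(ler0_norm hx) ?(gtr0_norm hx);
  case: leP; lra.
Qed.

Section ConvexQuadratic.
Variable R : realType.

Lemma derive1_quadratic0 (a b c : R) :
  derive1 (fun s : R => c + s * b + s ^+ 2 * a) 0 = b.
Proof.
rewrite derive1E derive_val.
by rewrite !scaler0 !scale0r !add0r scaler0 addr0 mul1r /GRing.scale /= mulr1.
Qed.

Variable p : nat.

Lemma cvx_quad_line {h : 'rV[R]_p -> R} : cvx_quad h ->
  forall w e, exists a b, 0 <= a /\
    forall s, h (w + s *: e) = h w + s * b + s ^+ 2 * a.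
Proof.
move=> [Q [c [d [psdQ hE]]]] w e.
exists ((e *m Q *m e^T) 0 0).
exists ((e *m Q *m w^T) 0 0 + (w *m Q *m e^T) 0 0 + (e *m c^T) 0 0).
split=> [|s]; first exact: psdQ.
rewrite !hE linearD /= linearZ /= !mulmxDl !mulmxDr -!scalemxAl -!scalemxAr.
rewrite !mxE; ring.
Qed.

Lemma cvx_quad_coord {h : 'rV[R]_p -> R} : cvx_quad h ->
  forall j w, exists a, 0 <= a /\ forall s,
    h (w + s *: delta_mx 0 j) = h w + s * partial h j w + s ^+ 2 * a.
Proof.
move=> hq j w; have [a [b [a0 hE]]] := cvx_quad_line hq w (delta_mx 0 j).
suff -> : partial h j w = b by exists a.
rewrite /partial (_ : (fun t => _) = (fun s => h w + s * b + s ^+ 2 * a)).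
  exact: derive1_quadratic0.
by apply: funext => s; rewrite hE.
Qed.

Lemma cvx_quad_decr_coord_lt {h : 'rV[R]_p -> R} : cvx_quad h ->
  (forall z : 'rV[R]_p, (forall j, 0 <= z 0 j) -> forall j, 0 < partial h j z) ->
  forall (z : 'rV[R]_p) j (d : R), (forall j', 0 <= z 0 j') ->
  0 < d -> d <= z 0 j -> h (z - d *: delta_mx 0 j) < h z.
Proof.
move=> hq hpos z j d z0 d0 dz; set w := z - d *: delta_mx 0 j.
have w0 j' : 0 <= w 0 j'.
  rewrite !mxE eqxx /=.
  by case: (eqVneq j' j) => [->|_]; rewrite ?mulr1 ?subr_ge0 ?mulr0 ?subr0.
have [a [a0 hE]] := cvx_quad_coord hq j w.
have := hE d; rewrite /w subrK => ->.
have : 0 < d * partial h j w by rewrite mulr_gt0 ?hpos.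
have : 0 <= d ^+ 2 * a by rewrite mulr_ge0 ?sqr_ge0.
lra.
Qed.

End ConvexQuadratic.

Section ProblemP.
Context {R : realType} {n m k : nat}.
Context {f : 'I_n -> bool -> 'rV[R]_m -> 'M[R]_(n, m) -> R}.
Context {g : 'I_n -> bool -> 'rV[R]_m -> 'rV[R]_k}.

Section Feasibility.
Context {K : R} {x : 'I_n -> bool} {y : 'M[R]_(n, m)}.
Context {yt : 'I_n -> bool -> 'rV[R]_m} {lam : 'I_n -> bool -> 'rV[R]_k}.
Context {kap zet : 'I_n -> bool -> R}.

Lemma feasP_row : feasP f g K x y yt lam kap zet -> forall i, row i y = yt i (x i).
Proof.
move=> hf i; have [_ [_ [_ [_ [hy0 hy1]]]]] := hf i.
apply/rowP => j; rewrite mxE; apply/eqP; rewrite eq_le.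
move: (hy0 j) (hy1 j); rewrite /bR; case: (x i) => /= /andP[? ?] /andP[? ?].
  by apply/andP; split; lra.
by apply/andP; split; lra.
Qed.

Lemma feasP_off : feasP f g K x y yt lam kap zet ->
  forall i, kap i (~~ x i) = 0 /\ zet i (~~ x i) = 0.
Proof.
move=> hf i; have [hb [_ [h1 [h0 _]]]] := hf i.
move: (hb true) (hb false) h1 h0; rewrite /bR.
by case: (x i) => /= [_ [_ [? ?]]|[_ [? ?]] _]; split; lra.
Qed.

Lemma feasP_balance : feasP f g K x y yt lam kap zet -> forall i,
  f i (x i) (yt i (x i)) y + kap i (x i) - zet i (x i)
    = f i (~~ x i) (yt i (~~ x i)) y.
Proof.
move=> hf i; have [kap0 zet0] := feasP_off hf i; have [_ [hbal _]] := hf i.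
by move: kap0 zet0 hbal; case: (x i) => /= ? ?; lra.
Qed.

Lemma feasP_intro :
  (forall i b, KKT f g i b y (yt i b) (lam i b) /\ 0 <= kap i b /\ 0 <= zet i b) ->
  (forall i, row i y = yt i (x i)) ->
  (forall i, kap i (~~ x i) = 0 /\ zet i (~~ x i) = 0) ->
  (forall i, f i (x i) (yt i (x i)) y + kap i (x i) - zet i (x i)
               = f i (~~ x i) (yt i (~~ x i)) y) ->
  (forall i, kap i (x i) + zet i (x i) <= K) ->
  (forall i j, `|(yt i (~~ x i)) 0 j - y i j| <= K) ->
  feasP f g K x y yt lam kap zet.
Proof.
move=> hb hrow hoff hbal hK hy i; split; first exact: hb.
have hyi j : y i j = (yt i (x i)) 0 j by rewrite -hrow mxE.
have := (hb i true).2; have := (hb i false).2.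
move: (hoff i) (hbal i) (hK i) hyi (hy i); rewrite /bR.
case: (x i) => /= -[-> ->] ? ? hyi hyK [? ?] [? ?].
  do 3 (split; first lra); split=> j; have := hyK j; rewrite ?hyi ler_norml.
    by move=> /andP[? ?]; apply/andP; split; lra.
  by move=> _; apply/andP; split; lra.
do 3 (split; first lra); split=> j; have := hyK j; rewrite ?hyi ler_norml.
  by move=> _; apply/andP; split; lra.
by move=> /andP[? ?]; apply/andP; split; lra.
Qed.

Lemma feasP_compensations {kap' zet' : 'I_n -> bool -> R} :
  feasP f g K x y yt lam kap zet ->
  (forall i b, [/\ 0 <= kap' i b, 0 <= zet' i b,
     kap' i b - zet' i b = kap i b - zet i b &
     kap' i b + zet' i b <= kap i b + zet i b]) ->
  feasP f g K x y yt lam kap' zet'.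
Proof.
move=> hf h' i; have [hb [hbal [h1 [h0 hy]]]] := hf i.
have [? ? e1 ?] := h' i true; have [? ? e0 ?] := h' i false.
split; first by move=> b; have [? ? _ _] := h' i b; split=> //; exact: (hb b).1.
by split; [lra | split; [lra | split; [lra | exact: hy]]].
Qed.

End Feasibility.

Lemma is_min_KKT i b y v lam : A1 f g ->
  KKT f g i b y v lam -> is_min f g i b y v.
Proof. by move=> hA1 hkkt; apply/((hA1 i b y).2.2 v); exists lam. Qed.

Lemma quasi_eq_feasP (K : R) x y zeta : A1 f g -> bigK f g K ->
  quasi_eq f g x y zeta -> exists yt lam kap zet, feasP f g K x y yt lam kap zet.
Proof.
move=> hA1 [_ [hKv hKf]] hq.
have [yx hyx] := choice (fun i => (hq i).2.2).
pose yt i b := if b == x i then row i y else yx i.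
have ytx i : yt i (x i) = row i y by rewrite /yt eqxx.
have ytN i : yt i (~~ x i) = yx i by rewrite /yt; case: (x i).
have hmin i b : is_min f g i b y (yt i b).
  by rewrite /yt; case: eqP => [->|]; [exact: (hq i).1 | case: b (x i) (hyx i).1 => -[]].
have [lam hlam] := choice (fun ib : 'I_n * bool =>
  proj1 ((hA1 ib.1 ib.2 y).2.2 _) (hmin ib.1 ib.2)).
pose D i := f i (~~ x i) (yx i) y - f i (x i) (row i y) y.
pose kap i b := if b == x i then Num.max (D i) 0 else 0.
pose zet i b := if b == x i then Num.max (- D i) 0 else 0.
have kapN i : kap i (~~ x i) = 0 by rewrite /kap; case: (x i).
have zetN i : zet i (~~ x i) = 0 by rewrite /zet; case: (x i).
exists yt, (fun i b => lam (i, b)), kap, zet; apply: feasP_intro.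
- move=> i b; split; first exact: (hlam (i, b)).
  by rewrite /kap /zet; case: (b == x i); rewrite ?le_max ?lexx ?orbT.
- by move=> i; rewrite ytx.
- by move=> i; rewrite kapN zetN.
- by move=> i; rewrite /kap /zet eqxx ytx ytN -addrA maxr0_subN /D addrC subrK.
- move=> i; rewrite /kap /zet eqxx maxr0_addN; apply/ltW/hKf.
  + by move=> j; exists (x j); exact: (hq j).1.1.
  + exact: (hyx i).1.1.
  + exact: (hq i).1.1.
- move=> i j; rewrite ytN; apply/ltW.
  by have := hKv i _ _ _ _ (hyx i).1.1 (hq i).1.1 j; rewrite mxE.
Qed.

Context {F : ('I_n -> bool) -> 'M[R]_(n, m) -> R} {G : 'rV[R]_n -> 'rV[R]_n -> R}.

Definition zrow (zet : 'I_n -> bool -> R) : 'rV[R]_(n + n) :=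
  row_mx (\row_i zet i true) (\row_i zet i false).

Definition zindex (i : 'I_n) (b : bool) : 'I_(n + n) :=
  if b then lshift n i else rshift n i.

Definition shift_at (i : 'I_n) (b : bool) (d : R) (u : 'I_n -> bool -> R) :=
  fun i' b' => if (i' == i) && (b' == b) then u i' b' - d else u i' b'.

Lemma objP_zrow x y zet : objP F G x y zet = F x y + Gflat G (zrow zet).
Proof. by rewrite /objP /Gflat /zrow row_mxKl row_mxKr. Qed.

Lemma zrow_shift_at i b d zet :
  zrow (shift_at i b d zet) = zrow zet - d *: delta_mx 0 (zindex i b).
Proof.
apply/rowP => j; rewrite !mxE /zindex /shift_at.
case: (split_ordP j) => i' ->; rewrite !mxE.
  by case: b; rewrite ?eq_lshift ?eq_lrshift; case: (i' == i); rewrite /= ?mulr1 ?mulr0 ?subr0.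
by case: b; rewrite ?eq_rshift ?eq_rlshift; case: (i' == i); rewrite /= ?mulr1 ?mulr0 ?subr0.
Qed.

Lemma objP_shift_at_lt x y {zet i b d} : A2 F G ->
  (forall i' b', 0 <= zet i' b') -> 0 < d -> d <= zet i b ->
  objP F G x y (shift_at i b d zet) < objP F G x y zet.
Proof.
move=> [_ [hGq hGpos]] zet0 d0 dz.
rewrite !objP_zrow zrow_shift_at ltrD2l; apply: cvx_quad_decr_coord_lt => //.
  by move=> j; rewrite /zrow; case: (split_ordP j) => i' ->; rewrite ?row_mxEl ?row_mxEr mxE.
by rewrite /zrow /zindex; case: b dz; rewrite ?row_mxEl ?row_mxEr mxE.
Qed.

Definition optP (K : R) x y yt lam kap zet :=
  feasP f g K x y yt lam kap zet /\
  forall x' y' yt' lam' kap' zet', feasP f g K x' y' yt' lam' kap' zet' ->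
    objP F G x y zet <= objP F G x' y' zet'.

Lemma optP_complementary {K x y yt lam kap zet} : A2 F G ->
  optP K x y yt lam kap zet -> forall i b, kap i b = 0 \/ zet i b = 0.
Proof.
move=> hA2 [hf hopt] i b.
have [kap0 zet0] : 0 <= kap i b /\ 0 <= zet i b by have [/(_ b) [_ []]] := hf i.
have [->|kap_neq0] := eqVneq (kap i b) 0; first by left.
have [->|zet_neq0] := eqVneq (zet i b) 0; first by right.
pose d := Num.min (kap i b) (zet i b).
have d0 : 0 < d by rewrite lt_min !lt0r kap_neq0 zet_neq0 kap0 zet0.
have [dk dz] : d <= kap i b /\ d <= zet i b by rewrite /d !ge_min !lexx orbT.
have hf' : feasP f g K x y yt lam (shift_at i b d kap) (shift_at i b d zet).
  apply: (feasP_compensations hf) => i' b'; rewrite /shift_at.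
  have [/(_ b') [_ []]] := hf i'.
  by case: ifP => [/andP[/eqP -> /eqP ->]|_] ? ?; split; lra.
have zet_ge0 i' b' : 0 <= zet i' b' by have [/(_ b') [_ []]] := hf i'.
have := objP_shift_at_lt x y hA2 zet_ge0 d0 dz.
by rewrite ltNge (hopt _ _ _ _ _ _ hf').
Qed.

Lemma optP_quasi_eq {K x y yt lam kap zet} : A1 f g -> A2 F G ->
  optP K x y yt lam kap zet -> quasi_eq f g x y (fun i => zet i true + zet i false).
Proof.
move=> hA1 hA2 hopt i; have hf := hopt.1.
have hmin b : is_min f g i b y (yt i b) by apply: is_min_KKT (((hf i).1 b).1).
have [_ zetN] := feasP_off hf i.
have -> : zet i true + zet i false = zet i (x i).
  by move: zetN; case: (x i) => /= ->; rewrite ?addr0 ?add0r.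
have := feasP_balance hf i; have := optP_complementary hA2 hopt i (x i).
have [/(_ (x i)) [_ [kap0 zet0]]] := hf i.
rewrite (feasP_row hf) => hc hbal; split; first exact: hmin.
split=> //; exists (yt i (~~ x i)); split; first exact: hmin.
by split=> [|z z0]; case: hc; lra.
Qed.

End ProblemP.

Theorem theorem2 (R : realType) (n m k : nat)
  (f : 'I_n -> bool -> 'rV[R]_m -> 'M[R]_(n, m) -> R)
  (g : 'I_n -> bool -> 'rV[R]_m -> 'rV[R]_k)
  (F : ('I_n -> bool) -> 'M[R]_(n, m) -> R)
  (G : 'rV[R]_n -> 'rV[R]_n -> R) (K : R) :
  f_indep f -> A1 f g -> A2 F G -> bigK f g K ->
  (* (i) optimal solutions of (P) give binary quasi-equilibria *)
  (forall x y yt lam kap zet,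
     feasP f g K x y yt lam kap zet ->
     (forall x' y' yt' lam' kap' zet', feasP f g K x' y' yt' lam' kap' zet' ->
        objP F G x y zet <= objP F G x' y' zet') ->
     quasi_eq f g x y (fun i => zet i true + zet i false)) /\
  (* (ii) binary quasi-equilibria extend to feasible points of (P) *)
  (forall x y zeta, quasi_eq f g x y zeta ->
     exists yt lam kap zet, feasP f g K x y yt lam kap zet).
Proof.
move=> _ hA1 hA2 hK; split=> [x y yt lam kap zet hf hopt | x y zeta].
  exact: (optP_quasi_eq hA1 hA2 (conj hf hopt)).
exact: quasi_eq_feasP.
Qed.
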